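(* Let $A=(a_0,\dots,a_{n-1})$ be an array of pairwise distinct numbers, $k>1$, and consider two consecutive segments $(q,j,\cdot)$ and $(q',j',\cdot)$ added by Cover-exact$(A,k)$ in consecutive iterations. Let $X=(x_1,\dots,x_k)$ be the lexicographically minimal (with respect to the sequence of positions) increasing subsequence of length $k$ of $(a_q,\dots,a_j)$, and $X'=(x'_1,\dots,x'_k)$ the lexicographically minimal increasing subsequence of length $k$ of $(a_{q'},\dots,a_{j'})$, where $x_t,x'_t$ denote positions. Then $x'_i\ge x_{i+1}$ for all $1\le i<k$.
   Context: For $i\le j$, $\mathrm{LIS}(i,j)$ denotes the length of a longest increasing subsequence of $(a_i,\dots,a_j)$. Cover-exact$(A,k)$: set $C=\emptyset$, $i=0$. Repeat: let $j$ be the smallest index $\ge i$ with $\mathrm{LIS}(i,j)\ge k$; if none exists, return $C$. Let $q$ be the largest index $\le j$ with $\mathrm{LIS}(q,j)\ge k$. Add the segment $(q,j,L)$ to $C$, where $L$ is a longest increasing subsequence of $(a_q,\dots,a_j)$, and set $i=q+1$. *)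

From HB Require Import structures.
From mathcomp Require Import all_boot all_order all_algebra.
Set Implicit Arguments. Unset Strict Implicit. Unset Printing Implicit Defensive.
Import Order.TTheory GRing.Theory Num.Theory.

(* Array A = (a_0,...,a_{n-1}) with n = size A, a_x = A`_x (0-indexed). *)

Definition LIS (R : realDomainType) (A : seq R) (i j : nat) : nat :=
  \max_(S : {set 'I_(size A)} |
          [forall x in S, (i <= x <= j)%N] &&
          [forall x in S, forall y in S, (x < y)%N ==> (A`_x < A`_y)%R])
     #|S|.

(* One iteration of Cover-exact(A,k) started at i adds the segment (q,j):
   j is the smallest index >= i with LIS(i,j) >= k, and q is the largest
   index <= j with LIS(q,j) >= k. *)
Definition cover_step (R : realDomainType) (A : seq R) (k i q j : nat) : Prop :=
  [/\ (i <= j < size A)%N, (k <= LIS A i j)%N &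
      (forall j', (i <= j' < j)%N -> (LIS A i j' < k)%N)] /\
  [/\ (q <= j)%N, (k <= LIS A q j)%N &
      (forall q', (q < q' <= j)%N -> (LIS A q' j < k)%N)].

(* The values taken by the loop variable i during the run of Cover-exact. *)
Inductive cover_reachable (R : realDomainType) (A : seq R) (k : nat) : nat -> Prop :=
  | cover_reach0 : cover_reachable A k 0
  | cover_reachS i q j : cover_reachable A k i -> cover_step A k i q j ->
      cover_reachable A k q.+1.

Definition inc_subseq (R : realDomainType) (A : seq R) (q j : nat) (X : seq nat) : bool :=
  [&& all (fun x => q <= x <= j)%N X, sorted ltn X &
      sorted (fun x y => (A`_x < A`_y)%R) X].

Fixpoint lexle (s t : seq nat) : bool :=
  match s, t with
  | [::], _ => true
  | _ :: _, [::] => false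
  | x :: s', y :: t' => (x < y)%N || ((x == y) && lexle s' t')
  end.

Definition lexmin_inc (R : realDomainType) (A : seq R) (k q j : nat) (X : seq nat) : Prop :=
  [/\ inc_subseq A q j X, size X = k &
      forall Y, inc_subseq A q j Y -> size Y = k -> lexle X Y].

From mathcomp Require Import all_boot all_order all_algebra.
From mathcomp Require Import zify.
Set Implicit Arguments. Unset Strict Implicit. Unset Printing Implicit Defensive.
Import Order.TTheory GRing.Theory Num.Theory.

(* Write x_0 < ... < x_n and y_0 < ... < y_n (n = k-1) for the
   positions of X and X'.  An increasing subsequence is encoded as a map
   f : nat -> nat that "steps" upwards (in position and value) on [0, n];
   two such maps can be spliced at an index whenever the junction itself is
   an upward step.  The cover algorithm yields three facts: x_0 = q < y_0,
   no increasing subsequence of length k lies in [q+1, j], and none lies in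
   [q+1, j'-1].  The first splice y_0..y_s x_{s+1}..x_n shows that
   y_s < x_{s+1} forces a_{x_{s+1}} < a_{y_s} ("cross_down"); the splice
   x_1..x_{m+1} y_m..y_{n-1} shows that x_{m+1} < y_m forces
   a_{y_m} < a_{x_{m+1}} ("cross_up").  Finally, let s be minimal with
   y_s < x_{s+1} and m >= s maximal with y_u < x_{u+1} for s <= u <= m.
   The two facts make x_0..x_s y_s..y_m x_{m+2}..x_n increasing; it lies in
   [q, j], is pointwise below X and strictly below it at index s+1, which
   contradicts lexicographic minimality of X ("no_undercut"). *)

Section Steps.
Variables (R : realDomainType) (A : seq R).

Definition incr (u v : nat) : bool := (u < v)%N && (A`_u < A`_v)%R.

Lemma incr_trans : transitive incr.
Proof.
move=> v u w /andP[uv Auv] /andP[vw Avw].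
by rewrite /incr (ltn_trans uv vw) (lt_trans Auv Avw).
Qed.

Lemma incrN_gt u v :
  uniq A -> (u < v)%N -> (v < size A)%N -> ~~ incr u v -> (A`_v < A`_u)%R.
Proof.
move=> uA uv vA; rewrite /incr uv /= -leNgt le_eqVlt => /orP[eAvu|//].
by move: eAvu; rewrite nth_uniq ?gtn_eqF //; apply: ltn_trans uv vA.
Qed.

Definition steps (f : nat -> nat) (a b : nat) : Prop :=
  forall u, (a <= u < b)%N -> incr (f u) (f u.+1).

Lemma steps_sub f a b a' b' :
  steps f a b -> (a <= a')%N -> (b' <= b)%N -> steps f a' b'.
Proof. by move=> st aa' bb' u /andP[au ub]; apply: st; lia. Qed.

Lemma steps_succ f a b : steps f a.+1 b.+1 -> steps (fun u => f u.+1) a b.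
Proof. by move=> st u /andP[au ub]; apply: st; lia. Qed.

Lemma steps_pred f a b : steps f a b -> steps (fun u => f u.-1) a.+1 b.+1.
Proof.
move=> st [|u] /andP[au ub] //=.
by case: u au ub => [|u] au ub; apply: st; lia.
Qed.

Lemma steps_incr f a b u v :
  steps f a b -> (a <= u)%N -> (u < v <= b)%N -> incr (f u) (f v).
Proof.
move=> st au; elim: v => [//|v IH] /andP[].
rewrite ltnS leq_eqVlt => /orP[/eqP <- vb|uv vb]; first by apply: st; lia.
by apply: incr_trans (IH _) (st v _); lia.
Qed.

Lemma steps_le f a b u v :
  steps f a b -> (a <= u)%N -> (u <= v <= b)%N -> (f u <= f v)%N.
Proof.
move=> st au /andP[]; rewrite leq_eqVlt => /orP[/eqP <- //|uv vb].
by case/andP: (steps_incr st au (introT andP (conj uv vb))) => /ltnW.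
Qed.

Definition switch (f g : nat -> nat) (s u : nat) : nat :=
  if (u <= s)%N then f u else g u.

Lemma steps_switch f g a s b :
  (a <= s <= b)%N -> steps f a s -> ((s < b)%N -> incr (f s) (g s.+1)) ->
  steps g s.+1 b -> steps (switch f g s) a b.
Proof.
move=> /andP[as_ sb] stf glue stg u /andP[au ub]; rewrite /switch.
case: (ltngtP u s) => [us|su|us]; last by rewrite us; apply: glue; rewrite -us.
- by apply: stf; lia.
- by apply: stg; lia.
Qed.

Lemma steps_LIS f n lo hi :
  steps f 0 n -> (lo <= f 0)%N -> (f n <= hi)%N -> (hi < size A)%N ->
  (n < LIS A lo hi)%N.
Proof.
move=> st lo0 fhi hiA.
have f_mono u v : (u <= v <= n)%N -> (f u <= f v)%N by apply: steps_le st _.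
have f_lt u v : (u < v <= n)%N -> (f u < f v)%N.
  by move=> uvn; case/andP: (steps_incr st (leq0n u) uvn).
have f_range u : (u <= n)%N -> (lo <= f u <= hi)%N.
  move=> un; rewrite (leq_trans lo0 (f_mono 0 u _)) ?un //.
  by rewrite (leq_trans (f_mono u n _) fhi) // un leqnn.
have f_refl u v : (u <= n)%N -> (f u < f v)%N -> (u < v)%N.
  move=> un fuv; case: (ltngtP u v) => // [vu|uv]; last by rewrite uv ltnn in fuv.
  by have := f_lt v u; rewrite vu un => /(_ isT); rewrite ltnNge ltnW.
pose h (u : 'I_n.+1) : 'I_(size A) := insubd (Ordinal hiA) (f u).
have val_h (u : 'I_n.+1) : val (h u) = f u.
  have /andP[_ fu_hi] := f_range u (ltn_ord u).
  by rewrite val_insubd (leq_ltn_trans fu_hi hiA).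
have h_inj : injective h.
  move=> u v /(congr1 val); rewrite !val_h => e; apply/val_inj/eqP.
  case: (ltngtP u v) => // [uv|vu].
    by have := f_lt u v; rewrite uv -ltnS ltn_ord e ltnn => /(_ isT).
  by have := f_lt v u; rewrite vu -ltnS ltn_ord e ltnn => /(_ isT).
rewrite -[n.+1]card_ord -(card_imset _ h_inj) /LIS.
apply: (leq_bigmax_cond (F := fun S : {set 'I_(size A)} => #|S|)).
apply/andP; split.
  by apply/forall_inP => ? /imsetP[u _ ->]; rewrite val_h; apply: f_range; rewrite -ltnS.
apply/forall_inP => ? /imsetP[u _ ->]; apply/forall_inP => ? /imsetP[v _ ->].
apply/implyP; rewrite !val_h => /(f_refl _ _ (ltn_ord u)) uv.
by case/andP: (steps_incr st (leq0n u) (introT andP (conj uv (ltn_ord v)))).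
Qed.

Lemma inc_subseq_steps q j X n :
  inc_subseq A q j X -> size X = n.+1 ->
  [/\ steps (nth 0 X) 0 n, (q <= nth 0 X 0)%N & (nth 0 X n <= j)%N].
Proof.
case/and3P=> /allP inX /(sortedP 0) pos_sorted /(sortedP 0) val_sorted sX.
have range u : (u <= n)%N -> (q <= nth 0 X u <= j)%N.
  by move=> un; apply/inX/mem_nth; rewrite sX ltnS.
split; [|by case/andP: (range 0 isT)|by case/andP: (range n (leqnn n))].
move=> u /andP[_ un]; have uX : (u.+1 < size X)%N by rewrite sX ltnS.
by apply/andP; split; [exact: pos_sorted|exact: val_sorted].
Qed.

Lemma steps_inc_subseq f n q j :
  steps f 0 n -> (q <= f 0)%N -> (f n <= j)%N -> inc_subseq A q j (mkseq f n.+1).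
Proof.
move=> st qf0 fnj; apply/and3P; split.
- apply/allP => ? /mapP[u]; rewrite mem_iota add0n ltnS => /andP[_ un] ->.
  rewrite (leq_trans qf0 (steps_le st (leq0n 0) _)) ?un //.
  by rewrite (leq_trans (steps_le st (leq0n u) _) fnj) // un leqnn.
- apply/(sortedP 0) => u; rewrite size_mkseq ltnS => un.
  by rewrite !nth_mkseq ?ltnS ?(ltnW un) //; case/andP: (st u un).
- apply/(sortedP 0) => u; rewrite size_mkseq ltnS => un.
  by rewrite !nth_mkseq ?ltnS ?(ltnW un) //; case/andP: (st u un).
Qed.

End Steps.

Lemma lexle_nth (X Y : seq nat) s :
  lexle X Y -> (s < size X)%N -> (s < size Y)%N ->
  (forall u, (u < s)%N -> nth 0 X u = nth 0 Y u) -> (nth 0 X s <= nth 0 Y s)%N.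
Proof.
elim: s X Y => [|s IH] [|x X] [|y Y] //= lex sX sY eq_pre.
  by case/orP: lex => [/ltnW|/andP[/eqP -> _]].
have exy : x = y := eq_pre 0 isT.
move: lex; rewrite exy ltnn eqxx /= => lex.
by apply: IH => // u us; apply: (eq_pre u.+1).
Qed.

Lemma lexmin_inc_le (R : realDomainType) (A : seq R) n q j X f s :
  lexmin_inc A n.+1 q j X -> steps A f 0 n -> (q <= f 0)%N -> (f n <= j)%N ->
  (s <= n)%N -> (forall u, (u < s)%N -> f u = nth 0 X u) -> (nth 0 X s <= f s)%N.
Proof.
move=> [_ sX minX] st qf0 fnj sn eq_pre.
have Xle := minX _ (steps_inc_subseq st qf0 fnj) (size_mkseq _ _).
rewrite -(nth_mkseq 0 f (_ : s < n.+1)%N) //.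
apply: (lexle_nth Xle); rewrite ?sX ?size_mkseq // => u us.
by rewrite nth_mkseq ?eq_pre //; lia.
Qed.

Lemma cover_step_start (R : realDomainType) (A : seq R) k i q j :
  cover_step A k i q j -> (i <= q)%N.
Proof.
move=> [[/andP[ij _] LISij _] [_ _ q_max]]; rewrite leqNgt; apply/negP => qi.
by have := q_max i; rewrite qi ij ltnNge LISij => /(_ isT).
Qed.

Section Crossing.
Variables (R : realDomainType) (A : seq R) (n q j j' : nat) (x y : nat -> nat).
Hypotheses (A_uniq : uniq A) (j_lt : (j < size A)%N) (j'_lt : (j' < size A)%N).
Hypotheses (x_steps : steps A x 0 n) (y_steps : steps A y 0 n).
Hypotheses (q_x0 : (q <= x 0)%N) (x_last : (x n <= j)%N).
Hypotheses (q_y0 : (q < y 0)%N) (y_last : (y n <= j')%N).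
Hypotheses (short_right : (LIS A q.+1 j <= n)%N)
           (short_left : (LIS A q.+1 j'.-1 <= n)%N).
Hypothesis x_lexmin : forall f s, steps A f 0 n -> (q <= f 0)%N -> (f n <= j)%N ->
  (s <= n)%N -> (forall u, (u < s)%N -> f u = x u) -> (x s <= f s)%N.

Let x_lt u v : (u < v <= n)%N -> (x u < x v)%N.
Proof. by move=> uvn; case/andP: (steps_incr x_steps (leq0n u) uvn). Qed.

Let y_lt u v : (u < v <= n)%N -> (y u < y v)%N.
Proof. by move=> uvn; case/andP: (steps_incr y_steps (leq0n u) uvn). Qed.

Let x_le u v : (u <= v <= n)%N -> (x u <= x v)%N.
Proof. exact: steps_le x_steps (leq0n u). Qed.

Arguments x_lt : clear implicits.
Arguments y_lt : clear implicits.
Arguments x_le : clear implicits.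

(* Otherwise x would be an increasing subsequence inside [q+1, j]. *)
Lemma x0_eq : x 0 = q.
Proof.
apply/eqP; rewrite eqn_leq q_x0 andbT leqNgt; apply/negP => qx0.
by have := steps_LIS x_steps qx0 x_last j_lt; lia.
Qed.

(* Otherwise y_0..y_s x_{s+1}..x_n is increasing inside [q+1, j]. *)
Lemma cross_down s :
  (s < n)%N -> (y s < x s.+1)%N -> (A`_(x s.+1) < A`_(y s))%R.
Proof.
move=> sn ys; apply: incrN_gt => //; first by have := x_le s.+1 n; lia.
apply/negP => glue.
have st : steps A (switch y x s) 0 n.
  apply: steps_switch => //; first by rewrite leq0n ltnW.
    exact: steps_sub y_steps (leqnn 0) (ltnW sn).
  exact: steps_sub x_steps (leq0n _) (leqnn n).
have := steps_LIS st; rewrite /switch leq0n leqNgt sn /=.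
by move=> /(_ q.+1 j q_y0 x_last j_lt); lia.
Qed.

(* Otherwise x_1..x_{m+1} y_m..y_{n-1} is increasing inside [q+1, j'-1]. *)
Lemma cross_up m :
  (m < n)%N -> (x m.+1 < y m)%N -> (A`_(y m) < A`_(x m.+1))%R.
Proof.
move=> mn xy; apply: incrN_gt => //; first by have := y_lt m n; lia.
apply/negP => glue.
have st : steps A (switch (fun u => x u.+1) (fun u => y u.-1) m) 0 n.
  apply: steps_switch => //; first lia.
  - exact: steps_succ (steps_sub x_steps (leq0n 1) mn).
  - case: n mn y_steps => // n' _ y_steps'.
    exact: steps_pred (steps_sub y_steps' (leq0n m) (leqnSn n')).
have := steps_LIS st; rewrite /switch leq0n leqNgt mn /=.
have := x_lt 0 1; have := y_lt n.-1 n; rewrite x0_eq.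
by move=> ? ? /(_ q.+1 j'.-1 _ _ _); lia.
Qed.

(* Replacing x_{s+1}..x_{m+1} by y_s..y_m yields an increasing subsequence
   of (a_q..a_j) that is pointwise below X and strictly below it at index
   s+1, which lexicographic minimality of X forbids. *)
Lemma no_undercut s m :
  (s <= m < n)%N -> incr A (x s) (y s) ->
  (forall u, (s <= u <= m)%N -> (y u < x u.+1)%N) ->
  ((m.+1 < n)%N -> incr A (y m) (x m.+2)) -> False.
Proof.
move=> /andP[sm mn] glue_s y_left glue_m.
have sn : (s < n)%N := leq_ltn_trans sm mn.
pose Z := switch x (switch (fun u => y u.-1) x m.+1) s.
have Z_steps : steps A Z 0 n.
  apply: steps_switch; first by rewrite leq0n ltnW.
  - exact: steps_sub x_steps (leqnn 0) (ltnW sn).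
  - by move=> _; rewrite /switch ltnS sm /=.
  apply: steps_switch; first by rewrite ltnS sm mn.
  - exact: steps_pred (steps_sub y_steps (leq0n s) (ltnW mn)).
  - exact: glue_m.
  - exact: steps_sub x_steps (leq0n _) (leqnn n).
have Z_le u : (Z u <= x u)%N.
  rewrite /Z /switch; case: ifP => // us; case: ifP => // um.
  by case: u us um => // u us um /=; have := y_left u; lia.
have agree u : (u < s.+1)%N -> Z u = x u by rewrite /Z /switch ltnS => ->.
have := x_lexmin Z_steps (leq_trans q_x0 (Z_le 0)) (leq_trans (Z_le n) x_last) sn agree.
have := y_left s; rewrite leqnn sm /Z /switch ltnn ltnS sm /=.
by move=> /(_ isT); lia.
Qed.

Lemma x_succ_le_y s : (s < n)%N -> (x s.+1 <= y s)%N.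
Proof.
elim/ltn_ind: s => s IH sn; rewrite leqNgt; apply/negP => ys.
have glue_s : incr A (x s) (y s).
  apply/andP; split.
    case: s IH sn ys => [|s] IH sn ys; first by rewrite x0_eq.
    by have := IH s (ltnSn s) (ltnW sn); have := y_lt s s.+1; lia.
  by case/andP: (x_steps sn) => _ /lt_trans; apply; apply: cross_down.
(* m is the first index from s on after which y stops staying to the left
   of x shifted by one (or the end of the sequences). *)
pose P m := (s <= m)%N && ((m.+1 == n) || (x m.+2 <= y m.+1)%N).
have n_pred : n.-1.+1 = n by rewrite prednK // (leq_ltn_trans (leq0n s) sn).
have P_end : P n.-1 by rewrite /P /= n_pred eqxx orTb andbT -ltnS n_pred.
case: (ex_minnP (ex_intro P n.-1 P_end)) => m /andP[sm Pm] m_min.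
have mn : (m < n)%N by have := m_min _ P_end; have := sn; lia.
have y_left u : (s <= u <= m)%N -> (y u < x u.+1)%N.
  case/andP; rewrite leq_eqVlt => /orP[/eqP <- //|su um].
  case: u su um => // u su um; rewrite ltnNge; apply/negP => xy.
  by have := m_min u; rewrite /P /= -ltnS su xy orbT => /(_ isT); lia.
have glue_m : (m.+1 < n)%N -> incr A (y m) (x m.+2).
  move=> mn'; apply/andP; split.
    by have := y_left m; have := x_lt m.+1 m.+2; rewrite sm leqnn; lia.
  case/andP: (y_steps mn) => _ /lt_le_trans; apply.
  move: Pm; rewrite (ltn_eqF mn') /= leq_eqVlt.
  by case/orP => [/eqP -> //|/(cross_up mn')/ltW].
by apply: (no_undercut _ glue_s y_left glue_m); rewrite sm mn.
Qed.

End Crossing.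

Theorem lemma2 (R : realDomainType) (A : seq R) (k i q j q' j' : nat)
    (X X' : seq nat) :
  uniq A -> (1 < k)%N ->
  cover_reachable A k i ->
  cover_step A k i q j ->
  cover_step A k q.+1 q' j' ->
  lexmin_inc A k q j X ->
  lexmin_inc A k q' j' X' ->
  forall t, (0 < t < k)%N -> (nth 0 X t <= nth 0 X' t.-1)%N.
Proof.
move=> A_uniq k1 _ step1 step2 minX minX' t /andP[t0 tk].
have q_lt_q' := cover_step_start step2.
case: step1 => [[/andP[_ j_lt] _ _] [_ _ q_max]].
case: step2 => [[/andP[_ j'_lt] _ j'_min] _].
set n := k.-1; have kn : k = n.+1 by rewrite prednK // ltnW.
have n_pos : (0 < n <= n)%N by rewrite leqnn andbT -ltnS -kn.
rewrite kn in minX minX'; have [[incX sX _] [incX' sX' _]] := (minX, minX').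
have [x_steps q_x0 x_last] := inc_subseq_steps incX sX.
have [y_steps q_y0 y_last] := inc_subseq_steps incX' sX'.
have /andP[x0_lt_xn _] := steps_incr x_steps (leqnn 0) n_pos.
have /andP[y0_lt_yn _] := steps_incr y_steps (leqnn 0) n_pos.
have short_right : (LIS A q.+1 j <= n)%N by rewrite -ltnS -kn; apply: q_max; lia.
have short_left : (LIS A q.+1 j'.-1 <= n)%N by rewrite -ltnS -kn; apply: j'_min; lia.
have q_y0' : (q < nth 0 X' 0)%N by lia.
rewrite -(prednK t0); apply: (x_succ_le_y A_uniq j_lt j'_lt x_steps y_steps q_x0 x_last
  q_y0' y_last short_right short_left); last by lia.
by move=> f s; apply: lexmin_inc_le minX.
Qed.
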